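(* Let $A \in \mathbb{C}^{m\times n}$, let $k$ be an integer with $1 \le k \le \min\{m,n\}$, and let $s,t$ be integers with $0 \le s < k$, $t \ge 1$ and $s+t \le n$. Let $Q \in \mathbb{C}^{m\times m}$ be unitary and $\Pi$ an $n\times n$ permutation matrix such that $R^{(0)} := Q^*A\Pi$ has $\mathrm{GB}(s)$ form. For $s < j \le s+t$ write $\gamma(j) = \|R^{(0)}((s+1):m,\, j)\|_2^2$, and let $\mu = \max_{s+t<j\le n}\|A\Pi(:,j)\|_2^2$ (with $\mu=0$ if $s+t=n$). Assume $$\max_{s<j\le s+t}\gamma(j) \;\ge\; \mu .$$ Let $b$ be an integer with $1 \le b \le t$, and let $\sigma$ be a permutation of $\{1,\dots,t\}$ such that $\gamma(s+\sigma(1)) \ge \gamma(s+\sigma(2)) \ge \dots \ge \gamma(s+\sigma(t))$. Call the indices $s+\sigma(1),\dots,s+\sigma(b)$ the candidates, and let $\delta = \max\{\gamma(j) : j \in \{s+1,\dots,s+t\} \text{ not a candidate}\}$ (with $\delta = 0$ if $b=t$). Let $B = R^{(0)}((s+1):m,\; [s+\sigma(1),\dots,s+\sigma(b)]) \in \mathbb{C}^{(m-s)\times b}$, let $d=\min\{m-s,\,b\}$, and apply $d$ steps of the Golub–Businger algorithm to $B$, producing a permutation matrix $\widehat{P}$ of size $b$, Householder reflections $H_1,\dots,H_d \in \mathbb{C}^{(m-s)\times(m-s)}$ and $\widehat{R} = H_d\cdots H_1 B \widehat{P}$. Let $$c = \max\{\, i \in \{1,\dots,d\} : |\widehat{R}(i,i)|^2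 \ge \max(\delta,\mu) \,\}.$$ Let $\widehat{\Pi}$ be an $n\times n$ permutation matrix which fixes every column position outside $\{s+1,\dots,s+t\}$, places the candidate columns of $R^{(0)}$ (i.e. the columns of $R^{(0)}$ whose restrictions to rows $(s+1):m$ are the columns of $B$) into positions $s+1,\dots,s+b$ in the order given by $B\widehat{P}$ (so that $R^{(0)}\widehat{\Pi}((s+1):m,\,(s+1):(s+b)) = B\widehat{P}$), and places the remaining non-candidate indices of $\{s+1,\dots,s+t\}$ into positions $s+b+1,\dots,s+t$ in some order. Let $$\widehat{Q} = \begin{bmatrix} I_{s\times s} & 0 \\ 0 & H_1H_2\cdots H_c\end{bmatrix}.$$ Then $(Q\widehat{Q})^*A(\Pi\widehat{\Pi})$ has $\mathrm{GB}(s+c)$ form.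
   Context: A matrix $R \in \mathbb{C}^{m\times n}$ is said to have $\mathrm{GB}(k)$ form (for $0\le k\le\min\{m,n\}$) if its first $k$ columns are upper-triangular and $|R(i,i)| = \max_{i\le j\le n}\|R(i:m,\,j)\|_2$ for $1\le i\le k$; every matrix is in $\mathrm{GB}(0)$ form. Notation $R(i:m, j)$ denotes entries $i,\dots,m$ of column $j$; $A(:,j)$ is the $j$-th column. A Householder reflection at step $i$ on $\mathbb{C}^{p}$ is a unitary matrix $I - \tau vv^*$ with real $\tau\ge 0$, $v(1)=\dots=v(i-1)=0$, $v(i)=1$, which maps a given vector $x$ to $[x(1),\dots,x(i-1),\mu',0,\dots,0]$ with $|\mu'| = \|x(i:p)\|_2$. The Golub–Businger algorithm applied to $B\in\mathbb{C}^{p\times b}$ for $d\le\min\{p,b\}$ steps: set $R\leftarrow B$; for $i=1,\dots,d$, pick $j_{\max}\in\arg\max_{j\ge i}\|R(i:p,j)\|_2$, swap columns $i$ and $j_{\max}$ of $R$ (recording the swap in the permutation $\widehat{P}$), compute the Householder reflection $H_i$ at step $i$ zeroing entries $(i+1):p$ of column $i$, and set $R\leftarrow H_iR$. The output $\widehat R$ is the final $R$, which equals $H_d\cdots H_1 B\widehat P$. *)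

From HB Require Import structures.
From mathcomp Require Import all_boot all_order all_algebra all_fingroup.
From mathcomp Require Import reals complex.
Set Implicit Arguments. Unset Strict Implicit. Unset Printing Implicit Defensive.
Import Order.TTheory GRing.Theory Num.Theory.
Local Open Scope ring_scope.

Section Defs.
Variable R : realType.
Local Notation C := (R[i]).

Definition cabs (z : C) : R := ComplexField.Normc.normc z.

Definition ctr (p q : nat) (A : 'M[C]_(p, q)) : 'M[C]_(q, p) := (map_mx conjc A)^T.

Definition unitary (p : nat) (U : 'M[C]_p) : Prop := ctr U *m U = 1%:M.

(** Euclidean norm of A(r:p, j) (0-based row r, i.e. rows r+1..p in 1-based). *)
Definition colnorm (p q : nat) (A : 'M[C]_(p, q)) (r : nat) (j : 'I_q) : R :=
  Num.sqrt (\sum_(i < p | (r <= i)%N) cabs (A i j) ^+ 2).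

Definition colnorm2 (p q : nat) (A : 'M[C]_(p, q)) (r : nat) (j : 'I_q) : R :=
  \sum_(i < p | (r <= i)%N) cabs (A i j) ^+ 2.

(** GB(k) form (0-based indices: columns 0..k-1). *)
Definition GB (p q : nat) (k : nat) (M : 'M[C]_(p, q)) : Prop :=
  (k <= minn p q)%N /\
  (forall (i : 'I_p) (j : 'I_q), (j < k)%N -> (j < i)%N -> M i j = 0) /\
  (forall (i : 'I_p) (i' : 'I_q), val i = val i' -> (i < k)%N ->
     cabs (M i i') = \big[Num.max/0]_(j : 'I_q | (i <= j)%N) colnorm M i j).

Definition householder (p : nat) (k : nat) (H : 'M[C]_p) (x : 'cV[C]_p) : Prop :=
  unitary H /\
  (exists (tau : R) (v : 'cV[C]_p),
     0 <= tau /\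
     (forall i : 'I_p, (i < k)%N -> v i 0 = 0) /\
     (forall i : 'I_p, val i = k -> v i 0 = 1) /\
     H = 1%:M - (tau%:C)%C *: (v *m ctr v)) /\
  (forall i : 'I_p, (i < k)%N -> (H *m x) i 0 = x i 0) /\
  (forall i : 'I_p, (k < i)%N -> (H *m x) i 0 = 0) /\
  (forall i : 'I_p, val i = k -> cabs ((H *m x) i 0) = colnorm x k ord0).

(** A run of [d] steps of the Golub–Businger algorithm on B (0-based steps
    k = 0..d-1).  Rs k is the working matrix before step k (Rs 0 = B),
    H k is the Householder reflection of step k, and Ps k is the accumulated
    column permutation: Rs k = H (k-1) ... H 0 * B * Phat_k with
    (B * Phat_k)(:, l) = B(:, Ps k l).  The output is Rhat = Rs d, and the
    permutation matrix Phat corresponds to Ps d. *)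
Definition GB_run (p b d : nat) (B : 'M[C]_(p, b))
  (Rs : nat -> 'M[C]_(p, b)) (Ps : nat -> 'S_b) (H : nat -> 'M[C]_p) : Prop :=
  (d <= minn p b)%N /\ Rs 0%N = B /\ Ps 0%N = 1%g /\
  forall k : 'I_b, (k < d)%N ->
    exists jmax : 'I_b,
      (k <= jmax)%N /\
      (forall j : 'I_b, (k <= j)%N -> colnorm (Rs k) k j <= colnorm (Rs k) k jmax) /\
      householder k (H k) (col k (col_perm (tperm k jmax) (Rs k))) /\
      Rs k.+1 = H k *m col_perm (tperm k jmax) (Rs k) /\
      Ps k.+1 = (tperm k jmax * Ps k)%g.

(** permutation matrix with (A *m pmx pi)(:, j) = A(:, pi j) *)
Definition pmx (q : nat) (pi : 'S_q) : 'M[C]_q := col_perm pi 1%:M.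

End Defs.

(* Write R0 = Q^* A Pi.  The new matrix is Qhat^* R0 with its columns permuted
   by pihat, and Qhat^* fixes the first s rows while acting on the others by the
   unitary H_c ... H_1 of the Golub-Businger run.  Hence tail norms from any row
   r <= s are unchanged, and the first s rows keep the GB(s) property.  Below
   row s the candidate block becomes the first c columns of the run after c
   steps: they are upper triangular, and the squared diagonal entry of step l
   is the pivot of step l, the largest squared tail norm of the remaining
   columns at that step.  The pivoting rule, together with the fact that later
   reflections preserve those tail norms, bounds the other candidate columns by
   that pivot.  Every other column has squared tail norm at most
   max(delta, mu) <= |Rhat(c,c)|^2, and pivots are nonincreasing. *)

From mathcomp Require Import all_boot all_order all_algebra all_fingroup.
From mathcomp Require Import reals complex.
From mathcomp Require Import zify.
Import Order.TTheory GRing.Theory Num.Theory.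
Local Open Scope ring_scope.
Local Open Scope complex_scope.

Set Implicit Arguments. Unset Strict Implicit. Unset Printing Implicit Defensive.

Section ColumnNorms.
Variable R : realType.
Local Notation C := R[i].

Lemma cabs_ge0 (z : C) : 0 <= cabs z.
Proof. by case: z => a b; rewrite /cabs sqrtr_ge0. Qed.

Lemma cabs_sqrC (z : C) : (cabs z ^+ 2)%:C = z * z^*.
Proof.
rewrite -sqr_normc; have -> : `|z| = (cabs z)%:C by case: z.
by rewrite rmorphXn.
Qed.

Lemma sqrt_cabs_sqr (z : C) : Num.sqrt (cabs z ^+ 2) = cabs z.
Proof. by rewrite sqrtr_sqr ger0_norm ?cabs_ge0. Qed.

Lemma ctrM p q r (X : 'M[C]_(p, q)) (Y : 'M[C]_(q, r)) :
  ctr (X *m Y) = ctr Y *m ctr X.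
Proof. by rewrite /ctr map_mxM trmx_mul. Qed.

Lemma ctrK p q (X : 'M[C]_(p, q)) : ctr (ctr X) = X.
Proof. by apply/matrixP => i j; rewrite !mxE conjcK. Qed.

Lemma ctr1 p : ctr (1%:M : 'M[C]_p) = 1%:M.
Proof. by apply/matrixP => i j; rewrite !mxE eq_sym conjc_nat. Qed.

Lemma unitary_ctr p (U : 'M[C]_p) : unitary U -> unitary (ctr U).
Proof. by rewrite /unitary ctrK => /mulmx1C. Qed.

Lemma mul_pmx p q (X : 'M[C]_(p, q)) (pi : 'S_q) : X *m pmx R pi = col_perm pi X.
Proof. by rewrite /pmx col_permE mul1mx -col_permE. Qed.

Variables (p q : nat).
Implicit Types (X : 'M[C]_(p, q)).

Lemma colnormE X r j : colnorm X r j = Num.sqrt (colnorm2 X r j).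
Proof. by []. Qed.

Lemma colnorm2_ge0 X r j : 0 <= colnorm2 X r j.
Proof. by apply: sumr_ge0 => i _; rewrite exprn_ge0 ?cabs_ge0. Qed.

Lemma colnorm_le_cabs X r j z : colnorm2 X r j <= cabs z ^+ 2 -> colnorm X r j <= cabs z.
Proof. by move=> h; rewrite -sqrt_cabs_sqr colnormE ler_sqrt // exprn_ge0 ?cabs_ge0. Qed.

Lemma cabs_le_colnorm X r (i : 'I_p) j : (r <= i)%N -> cabs (X i j) <= colnorm X r j.
Proof.
move=> hr; rewrite -sqrt_cabs_sqr colnormE ler_sqrt ?colnorm2_ge0 //.
rewrite /colnorm2 (bigD1 i) //= lerDl; apply: sumr_ge0 => l _.
by rewrite exprn_ge0 ?cabs_ge0.
Qed.

Lemma colnorm2_split X r r' j : (r <= r')%N ->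
  colnorm2 X r j = \sum_(i < p | (r <= i < r')%N) cabs (X i j) ^+ 2 + colnorm2 X r' j.
Proof.
move=> hr; rewrite /colnorm2 (bigID (fun i : 'I_p => (r' <= i)%N)) /= addrC.
by congr (_ + _); apply: eq_bigl => i; [rewrite -ltnNge | apply/idP/idP]; lia.
Qed.

Lemma colnorm2_le_tail X r r' j : (r <= r')%N -> colnorm2 X r' j <= colnorm2 X r j.
Proof.
move=> hr; rewrite (colnorm2_split _ _ hr) lerDr.
by apply: sumr_ge0 => i _; rewrite exprn_ge0 ?cabs_ge0.
Qed.

Lemma colnorm2_col X r j : colnorm2 (col j X) r ord0 = colnorm2 X r j.
Proof. by apply: eq_bigr => i _; rewrite mxE. Qed.

Lemma colnorm2_col_perm X (pi : 'S_q) r j :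
  colnorm2 (col_perm pi X) r j = colnorm2 X r (pi j).
Proof. by apply: eq_bigr => i _; rewrite mxE. Qed.

Lemma colnorm2_unitary (U : 'M[C]_p) X j :
  unitary U -> colnorm2 (U *m X) 0 j = colnorm2 X 0 j.
Proof.
have colnorm2E (Y : 'M[C]_(p, q)) : (colnorm2 Y 0 j)%:C = (ctr (col j Y) *m col j Y) 0 0.
  rewrite /colnorm2 mxE rmorph_sum; apply: eq_big => // i _.
  by rewrite -[LHS]/(((cabs _)^+2)%:C) cabs_sqrC /ctr !mxE mulrC.
move=> hU; apply: complexI.
by rewrite !colnorm2E !colE -mulmxA ctrM -mulmxA (mulmxA (ctr U)) hU mul1mx.
Qed.

Lemma colnorm2_unitary_fix_top (U : 'M[C]_p) X r j : unitary U ->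
  (forall i : 'I_p, (i < r)%N -> (U *m X) i j = X i j) ->
  colnorm2 (U *m X) r j = colnorm2 X r j.
Proof.
move=> hU htop.
have top_eq : \sum_(i < p | (0 <= i < r)%N) cabs ((U *m X) i j) ^+ 2 =
              \sum_(i < p | (0 <= i < r)%N) cabs (X i j) ^+ 2.
  by apply: eq_bigr => i /andP[_ /htop ->].
move: (colnorm2_unitary X j hU).
by rewrite !(colnorm2_split _ _ (leq0n r)) top_eq => /addrI.
Qed.

Lemma GB_colnorm_le k X (i : 'I_p) (i' : 'I_q) (j : 'I_q) : GB k X -> val i = val i' ->
  (i < k)%N -> (i <= j)%N -> colnorm X i j <= cabs (X i i').
Proof.
by case=> _ [_ diag] ei hik hij; rewrite (diag i i' ei hik) (bigD1 j) //= le_max lexx.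
Qed.

Lemma cabs_diag_eq_bigmax X (i : 'I_p) (i' : 'I_q) : val i = val i' ->
  (forall j : 'I_q, (i <= j)%N -> colnorm X i j <= cabs (X i i')) ->
  cabs (X i i') = \big[Num.max/0]_(j : 'I_q | (i <= j)%N) colnorm X i j.
Proof.
move=> ei dom; apply/le_anti/andP; split; last exact: bigmax_le (cabs_ge0 _) dom.
have hii' : (i <= i')%N by rewrite ei.
by rewrite (bigD1 i') //= le_max cabs_le_colnorm.
Qed.

End ColumnNorms.

Section Householder.
Variables (R : realType) (p k : nat) (Hk : 'M[R[i]]_p) (x : 'cV[R[i]]_p).
Hypothesis hH : householder k Hk x.

Lemma householder_id_top (i l : 'I_p) : (i < k)%N || (l < k)%N -> Hk i l = (i == l)%:R.
Proof.
case: hH => _ [[tau [v [_ [v0 [_ ->]]]]] _] hil.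
rewrite !mxE big_ord1 /ctr !mxE.
by case/orP: hil => [/v0|/v0] ->; rewrite ?conjc0 !(mul0r, mulr0) subr0.
Qed.

Lemma householder_ctr : ctr Hk = Hk.
Proof.
case: hH => _ [[tau [v [_ [_ [_ ->]]]]] _].
apply/matrixP => i l; rewrite /ctr !mxE !big_ord1 !mxE.
rewrite rmorphB rmorphMn rmorph1 !rmorphM /= conjcK oppr0 eq_sym.
by congr (_ - _ * _); apply: mulrC.
Qed.

Lemma householder_fix_top q (X : 'M[R[i]]_(p, q)) (i : 'I_p) j :
  (i < k)%N -> (Hk *m X) i j = X i j.
Proof.
move=> hi; rewrite mxE (bigD1 i) //= householder_id_top ?hi // eqxx mul1r.
by rewrite big1 ?addr0 // => l hl; rewrite householder_id_top ?hi // eq_sym (negbTE hl) mul0r.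
Qed.

Lemma householder_fix_col q (X : 'M[R[i]]_(p, q)) j :
  (forall i : 'I_p, (k <= i)%N -> X i j = 0) -> forall i, (Hk *m X) i j = X i j.
Proof.
move=> hX i; case: (ltnP i k) => [/householder_fix_top//|hi].
rewrite hX // mxE big1 // => l _; case: (ltnP l k) => hl; last by rewrite hX // mulr0.
rewrite householder_id_top ?hl ?orbT //; suff /negbTE-> : i != l by rewrite mul0r.
by apply: contraTneq hi => ->; rewrite -ltnNge.
Qed.

Lemma householder_colnorm2 q (X : 'M[R[i]]_(p, q)) r j :
  (r <= k)%N -> colnorm2 (Hk *m X) r j = colnorm2 X r j.
Proof.
move=> hr; apply: colnorm2_unitary_fix_top; first by case: hH.
by move=> i hi; apply: householder_fix_top; apply: leq_trans hi hr.
Qed.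

End Householder.

Fact dshift_subproof m s (i : 'I_(m - s)) : (s + i < m)%N.
Proof. by have := ltn_ord i; lia. Qed.

Definition dshift m s (i : 'I_(m - s)) : 'I_m := Ordinal (dshift_subproof i).
Arguments dshift {m} s i.

Definition lowmx (T : Type) m q s (X : 'M[T]_(m, q)) : 'M[T]_(m - s, q) :=
  \matrix_(i, j) X (dshift s i) j.
Arguments lowmx {T m q} s X.

Lemma dshift_onto m s (i : 'I_m) : (s <= i)%N -> exists i' : 'I_(m - s), i = dshift s i'.
Proof.
move=> hi; have i'P : (i - s < m - s)%N by have := ltn_ord i; lia.
by exists (Ordinal i'P); apply: val_inj => /=; lia.
Qed.

Lemma sum_dshift (V : nmodType) m s (P : pred nat) (F : 'I_m -> V) : (s < m)%N ->
  \sum_(i < m | (s <= i)%N && P (i - s)%N) F i = \sum_(i < m - s | P i) F (dshift s i).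
Proof.
move=> hs; pose down (i : 'I_m) : 'I_(m - s) := Ordinal (ltn_sub2r hs (ltn_ord i)).
rewrite (reindex_onto (dshift s) down) => [|i /andP[hi _]]; last first.
  by apply: val_inj => /=; rewrite subnKC.
apply: eq_bigl => i; rewrite /= leq_addr addKn.
by rewrite -val_eqE /= addKn eqxx andbT.
Qed.

Lemma colnorm2_lowmx (R : realType) m q s (X : 'M[R[i]]_(m, q)) r j : (s < m)%N ->
  colnorm2 (lowmx s X) r j = colnorm2 X (s + r) j.
Proof.
move=> hs; rewrite /colnorm2.
rewrite (eq_bigl (fun i : 'I_m => (s <= i)%N && (r <= i - s)%N)) ?sum_dshift //.
  by apply: eq_bigr => i _; rewrite mxE.
by move=> i /=; apply/idP/idP; lia.
Qed.

Section BlockDiagonal.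
Variables (R : realType) (m s : nat) (Qh : 'M[R[i]]_m) (U : 'M[R[i]]_(m - s)).
Hypothesis hsm : (s < m)%N.
Hypothesis Qh_top : forall i j : 'I_m, (i < s)%N || (j < s)%N -> Qh i j = (i == j :> nat)%:R.
Hypothesis Qh_low : forall i j : 'I_(m - s), Qh (dshift s i) (dshift s j) = U i j.

Lemma block_mul_top q (X : 'M[R[i]]_(m, q)) (i : 'I_m) j :
  (i < s)%N -> (ctr Qh *m X) i j = X i j.
Proof.
move=> hi; rewrite mxE (bigD1 i) //= /ctr !mxE Qh_top ?hi // eqxx conjc_nat mul1r.
rewrite big1 ?addr0 // => l hl; rewrite !mxE Qh_top ?hi ?orbT //.
by rewrite val_eqE (negbTE hl) conjc_nat mul0r.
Qed.

Lemma lowmx_block_mul q (X : 'M[R[i]]_(m, q)) : lowmx s (ctr Qh *m X) = ctr U *m lowmx s X.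
Proof.
apply/matrixP => i j; rewrite !mxE (bigID (fun l : 'I_m => (s <= l)%N)) /=.
rewrite [X in _ + X]big1 ?addr0 => [|l]; last first.
  rewrite -ltnNge => hl; rewrite /ctr !mxE Qh_top ?hl // conjc_nat.
  by case: eqP => [el|]; rewrite ?mul0r //; move: hl; rewrite el /= ltnNge leq_addr.
rewrite (eq_bigl (fun l : 'I_m => (s <= l)%N && xpredT (l - s)%N)) => [|l]; last by rewrite andbT.
by rewrite (@sum_dshift _ m s xpredT) //; apply: eq_bigr => l _; rewrite /ctr !mxE Qh_low.
Qed.

Lemma block_colnorm2 q (X : 'M[R[i]]_(m, q)) r j : unitary U -> (r <= s)%N ->
  colnorm2 (ctr Qh *m X) r j = colnorm2 X r j.
Proof.
move=> hU hr; rewrite !(colnorm2_split _ _ hr); congr (_ + _).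
  by apply: eq_bigr => i /andP[_ hi]; rewrite block_mul_top.
rewrite -[s]addn0 -!colnorm2_lowmx ?addn0 // lowmx_block_mul.
by rewrite colnorm2_unitary //; apply: unitary_ctr.
Qed.

End BlockDiagonal.

Section GolubBusingerRun.
Variables (R : realType) (p b d : nat) (B : 'M[R[i]]_(p, b)).
Variables (Rs : nat -> 'M[R[i]]_(p, b)) (Ps : nat -> 'S_b) (H : nat -> 'M[R[i]]_p).
Hypothesis hrun : GB_run d B Rs Ps H.

Fixpoint refl_prod k : 'M[R[i]]_p := if k is k'.+1 then H k' *m refl_prod k' else 1%:M.

Definition work k := refl_prod k *m B.

Definition pivot k := \big[Num.max/0]_(j : 'I_b | (k <= j)%N) colnorm2 (work k) k (Ps k j).

Lemma work_succ k : work k.+1 = H k *m work k.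
Proof. by rewrite /work /= mulmxA. Qed.

Lemma run_d_le_b : (d <= b)%N.
Proof. by case: hrun; rewrite leq_min => /andP[]. Qed.

Lemma run_d_le_p : (d <= p)%N.
Proof. by case: hrun; rewrite leq_min => /andP[]. Qed.

Lemma run_step k (kb : (k < b)%N) : (k < d)%N ->
  exists jm : 'I_b, [/\ (k <= jm)%N,
    forall j : 'I_b, (k <= j)%N -> colnorm (Rs k) k j <= colnorm (Rs k) k jm,
    householder k (H k) (col (Ordinal kb) (col_perm (tperm (Ordinal kb) jm) (Rs k))),
    Rs k.+1 = H k *m col_perm (tperm (Ordinal kb) jm) (Rs k) &
    Ps k.+1 = (tperm (Ordinal kb) jm * Ps k)%g].
Proof.
case: hrun => _ [_ [_ step]] hk.
by have [jm [? [? [? [? ?]]]]] := step (Ordinal kb) hk; exists jm.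
Qed.

Lemma Rs_work k : (k <= d)%N -> Rs k = col_perm (Ps k) (work k).
Proof.
elim: k => [|k IH] hk; first by case: hrun => _ [-> [-> _]]; rewrite col_perm1 /work mul1mx.
have [jm [_ _ _ -> ->]] := run_step (leq_trans hk run_d_le_b) hk.
apply/matrixP => i j; rewrite (IH (ltnW hk)) work_succ !mxE.
by apply: eq_bigr => l _; rewrite !mxE permM.
Qed.

Lemma run_step_work k (kb : (k < b)%N) : (k < d)%N ->
  exists jm : 'I_b, [/\ (k <= jm)%N,
    forall j : 'I_b, (k <= j)%N -> colnorm2 (work k) k (Ps k j) <= colnorm2 (work k) k (Ps k jm),
    householder k (H k) (col (Ps k jm) (work k)),
    Ps k.+1 = (tperm (Ordinal kb) jm * Ps k)%g &
    forall i, work k.+1 i (Ps k.+1 (Ordinal kb)) = (H k *m col (Ps k jm) (work k)) i 0].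
Proof.
move=> hk; have [jm [hjm hmax hH _ hP]] := run_step kb hk.
have RsE := Rs_work (ltnW hk).
exists jm; split=> // [j hj||i].
- have := hmax j hj; rewrite !colnormE ler_sqrt ?colnorm2_ge0 // RsE.
  by rewrite !colnorm2_col_perm.
- have colE : col (Ordinal kb) (col_perm (tperm (Ordinal kb) jm) (Rs k)) = col (Ps k jm) (work k).
    by apply/matrixP => i l; rewrite RsE !mxE tpermL.
  by rewrite -colE.
by rewrite hP permM tpermL work_succ colE mulmxA -colE !mxE.
Qed.

Lemma Ps_stable k k' : (k <= k')%N -> (k' <= d)%N ->
  forall l : 'I_b, (l < k)%N -> Ps k' l = Ps k l.
Proof.
move=> + + l hl; elim: k' => [|k' IH]; first by rewrite leqn0 => /eqP ->.
rewrite leq_eqVlt ltnS => /predU1P[-> //|hkk'] hk'd.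
have [jm [hjm _ _ -> _]] := run_step_work (leq_trans hk'd run_d_le_b) hk'd.
rewrite permM tpermD ?(IH hkk' (ltnW hk'd)) //; apply/eqP => /(congr1 val) /=; lia.
Qed.

Lemma Ps_tail k k' (j : 'I_b) : (k <= k')%N -> (k' <= d)%N -> (k <= j)%N ->
  exists2 j' : 'I_b, (k <= j')%N & Ps k' j = Ps k j'.
Proof.
elim: k' j => [|k' IH] j; first by rewrite leqn0 => /eqP-> _ hj; exists j.
rewrite leq_eqVlt ltnS => /predU1P[<- _ hj|hkk' hk'd hj]; first by exists j.
have kb := leq_trans hk'd run_d_le_b.
have [jm [hjm _ _ -> _]] := run_step_work kb hk'd.
have hkt : (k <= tperm (Ordinal kb) jm j)%N by case: tpermP => [_|_|_ _] /=; lia.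
by rewrite permM; apply: IH hkt; rewrite ?(ltnW hk'd).
Qed.

Lemma work_top k k' (i : 'I_p) j : (k <= k')%N -> (k' <= d)%N -> (i < k)%N ->
  work k' i j = work k i j.
Proof.
move=> + + hi; elim: k' => [|k' IH]; first by rewrite leqn0 => /eqP ->.
rewrite leq_eqVlt ltnS => /predU1P[-> //|hkk'] hk'd.
have [jm [_ _ hH _ _]] := run_step_work (leq_trans hk'd run_d_le_b) hk'd.
by rewrite work_succ (householder_fix_top hH) ?(IH hkk' (ltnW hk'd)) //; lia.
Qed.

Lemma work_colnorm2 k k' r j : (r <= k)%N -> (k <= k')%N -> (k' <= d)%N ->
  colnorm2 (work k') r j = colnorm2 (work k) r j.
Proof.
move=> hr; elim: k' => [|k' IH]; first by rewrite leqn0 => /eqP ->.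
rewrite leq_eqVlt ltnS => /predU1P[-> //|hkk'] hk'd.
have [jm [_ _ hH _ _]] := run_step_work (leq_trans hk'd run_d_le_b) hk'd.
by rewrite work_succ (householder_colnorm2 hH) ?(IH hkk' (ltnW hk'd)) //; lia.
Qed.

Lemma work_triangular k (l : 'I_b) (i : 'I_p) : (k <= d)%N -> (l < k)%N -> (l < i)%N ->
  work k i (Ps k l) = 0.
Proof.
elim: k i => [//|k IH] i hk; rewrite ltnS leq_eqVlt => /predU1P[el|hlk] hli.
  have kb : (k < b)%N by rewrite -el ltn_ord.
  have -> : l = Ordinal kb by apply: val_inj.
  have [jm [_ _ [_ [_ [_ [zero _]]]] _ ->]] := run_step_work kb hk.
  by rewrite zero //= -el.
rewrite (Ps_stable (leqnSn k) hk) // work_succ.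
have [jm [_ _ hH _ _]] := run_step_work (leq_trans hk run_d_le_b) hk.
rewrite (householder_fix_col hH) => [|i' hi']; first exact: IH i (ltnW hk) hlk hli.
exact: IH (ltnW hk) hlk (leq_trans hlk hi').
Qed.

Lemma pivot_ge0 k : 0 <= pivot k.
Proof. exact: bigmax_ge_id. Qed.

Lemma work_diag_succ k (i : 'I_p) (l : 'I_b) : val i = k -> val l = k -> (k < d)%N ->
  cabs (work k.+1 i (Ps k.+1 l)) ^+ 2 = pivot k.
Proof.
move=> ei el hk; have kb : (k < b)%N by rewrite -el ltn_ord.
have -> : l = Ordinal kb by apply: val_inj.
have [jm [hjm hmax [_ [_ [_ [_ hnorm]]]] _ ->]] := run_step_work kb hk.
rewrite hnorm // colnormE sqr_sqrtr ?colnorm2_ge0 // colnorm2_col.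
apply/le_anti/andP; split; last exact: bigmax_le (colnorm2_ge0 _ _ _) hmax.
by rewrite /pivot (bigD1 jm) //= le_max lexx.
Qed.

Lemma work_diag_pivot l k (i : 'I_p) (j : 'I_b) : val i = l -> val j = l ->
  (l < k)%N -> (k <= d)%N -> cabs (work k i (Ps k j)) ^+ 2 = pivot l.
Proof.
move=> ei ej hlk hkd.
rewrite (Ps_stable hlk hkd) ?ej // (work_top _ hlk hkd) ?ei //.
by apply: work_diag_succ; rewrite // (leq_trans hlk hkd).
Qed.

Lemma Rs_diag_pivot l k (i : 'I_p) (j : 'I_b) : val i = l -> val j = l ->
  (l < k)%N -> (k <= d)%N -> cabs (Rs k i j) ^+ 2 = pivot l.
Proof. by move=> ei ej hlk hkd; rewrite Rs_work // mxE (work_diag_pivot ei ej). Qed.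

Lemma colnorm2_le_pivot k k1 k2 (j : 'I_b) :
  (k <= k1)%N -> (k1 <= d)%N -> (k <= k2)%N -> (k2 <= d)%N -> (k <= j)%N ->
  colnorm2 (work k1) k (Ps k2 j) <= pivot k.
Proof.
move=> hk1 hk1d hk2 hk2d hj; rewrite (work_colnorm2 _ (leqnn k) hk1 hk1d).
have [j' hj' ->] := Ps_tail hk2 hk2d hj.
by rewrite /pivot (bigD1 j') //= le_max lexx.
Qed.

Lemma pivot_le k k' : (k <= k')%N -> (k' <= d)%N -> pivot k' <= pivot k.
Proof.
move=> hkk' hk'd; apply: bigmax_le (pivot_ge0 k) _ => j hj.
apply: le_trans (colnorm2_le_tail _ _ hkk') _.
by apply: colnorm2_le_pivot; rewrite ?(leq_trans hkk' hj).
Qed.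

Lemma refl_prod_unitary k : (k <= d)%N -> unitary (refl_prod k).
Proof.
elim: k => [_|k IH hk]; first by rewrite /unitary /= ctr1 mul1mx.
have [jm [_ _ [hH _] _ _]] := run_step_work (leq_trans hk run_d_le_b) hk.
by rewrite /unitary /= ctrM -mulmxA (mulmxA (ctr (H k))) hH mul1mx IH // ltnW.
Qed.

Lemma ctr_prod_refl k : (k <= d)%N -> ctr (\prod_(l < k) H l) = refl_prod k.
Proof.
elim: k => [_|k IH hk]; first by rewrite big_ord0 ctr1.
have [jm [_ _ hH _ _]] := run_step_work (leq_trans hk run_d_le_b) hk.
by rewrite big_ord_recr /= mulmxE ctrM -mulmxE IH ?(ltnW hk) // (householder_ctr hH).
Qed.

End GolubBusingerRun.

Lemma perm_fix_stable (T : finType) (P : pred T) (pi : {perm T}) x :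
  (forall y, ~~ P y -> pi y = y) -> P (pi x) = P x.
Proof.
move=> fix_out; case Px: (P x); last by rewrite fix_out ?Px.
apply: contraTT Px => Npx; move: (Npx) => /fix_out /perm_inj pxx.
by rewrite -pxx.
Qed.

Lemma perm_offblock_neq n s b (pi : 'S_n) (P : 'S_b) (f : 'I_b -> nat) :
  (s + b <= n)%N ->
  (forall (j : 'I_n) (l : 'I_b), val j = (s + l)%N -> val (pi j) = f (P l)) ->
  forall (j : 'I_n) (l : 'I_b), (s + b <= j)%N -> val (pi j) != f l.
Proof.
move=> hsbn blockE j l hj; apply/eqP => pjE.
have jjP : (s + (P^-1)%g l < n)%N by have := ltn_ord ((P^-1)%g l); lia.
have /perm_inj ejj : pi (Ordinal jjP) = pi j.
  by apply: val_inj; rewrite (blockE (Ordinal jjP) ((P^-1)%g l)) ?permKV.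
by move: hj; rewrite -ejj /=; have := ltn_ord ((P^-1)%g l); lia.
Qed.

Section Update.
Variables (R : realType) (m n s b d c : nat).
Variables (R0 : 'M[R[i]]_(m, n)) (B : 'M[R[i]]_(m - s, b)).
Variables (Rs : nat -> 'M[R[i]]_(m - s, b)) (Ps : nat -> 'S_b) (H : nat -> 'M[R[i]]_(m - s)).
Variables (Qh : 'M[R[i]]_m) (pihat : 'S_n) (theta : R).
Hypotheses (hsm : (s < m)%N) (hsbn : (s + b <= n)%N).
Hypotheses (hGB : GB s R0) (hrun : GB_run d B Rs Ps H) (hcd : (c <= d)%N).
Hypothesis Qh_top : forall i j : 'I_m, (i < s)%N || (j < s)%N -> Qh i j = (i == j :> nat)%:R.
Hypothesis Qh_low :
  forall i j : 'I_(m - s), Qh (dshift s i) (dshift s j) = (\prod_(l < c) H l) i j.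
Hypothesis pihat_top : forall j : 'I_n, (j < s)%N -> pihat j = j.
Hypothesis pihat_cand : forall (i : 'I_(m - s)) (j : 'I_n) (l : 'I_b),
  val j = (s + l)%N -> R0 (dshift s i) (pihat j) = B i (Ps d l).
(* [theta] stands for max(delta, mu). *)
Hypothesis theta_tail : forall j : 'I_n, (s + b <= j)%N -> colnorm2 R0 s (pihat j) <= theta.
Hypothesis theta_pivot : theta <= pivot B Ps H c.-1.

Local Notation N := (ctr Qh *m R0).

Let hdb : (d <= b)%N := run_d_le_b hrun.
Let hdm : (d <= m - s)%N := run_d_le_p hrun.

Lemma update_unitary : unitary (\prod_(l < c) H l).
Proof.
rewrite -[X in unitary X]ctrK (ctr_prod_refl hrun hcd).
exact/unitary_ctr/(refl_prod_unitary hrun hcd).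
Qed.

Lemma lowmx_update : lowmx s N = refl_prod H c *m lowmx s R0.
Proof. by rewrite (lowmx_block_mul hsm Qh_top Qh_low) (ctr_prod_refl hrun hcd). Qed.

Lemma update_cand (i : 'I_(m - s)) (j : 'I_n) (l : 'I_b) :
  val j = (s + l)%N -> N (dshift s i) (pihat j) = work B H c i (Ps d l).
Proof.
move=> hj; transitivity (lowmx s N i (pihat j)); first by rewrite [RHS]mxE.
by rewrite lowmx_update !mxE; apply: eq_bigr => r _; rewrite mxE (pihat_cand _ hj).
Qed.

Lemma colnorm2_update_top r j : (r <= s)%N -> colnorm2 N r j = colnorm2 R0 r j.
Proof. exact: (block_colnorm2 hsm Qh_top Qh_low _ _ update_unitary). Qed.

Lemma pihat_ge (j : 'I_n) : (s <= pihat j)%N = (s <= j)%N.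
Proof.
apply: (perm_fix_stable (P := fun j : 'I_n => s <= j)%N) => y.
by rewrite -ltnNge => /pihat_top.
Qed.

Lemma update_size : (s + c <= minn m n)%N.
Proof. by rewrite leq_min; apply/andP; split; lia. Qed.

Lemma update_triangular (i : 'I_m) (j : 'I_n) :
  (j < s + c)%N -> (j < i)%N -> N i (pihat j) = 0.
Proof.
have [_ [R0_tri _]] := hGB; move=> hjc hji; case: (ltnP j s) => hjs.
  rewrite pihat_top //; case: (ltnP i s) => his; first by rewrite (block_mul_top Qh_top) ?R0_tri.
  have [i' ->] := dshift_onto his.
  transitivity (lowmx s N i' j); first by rewrite [RHS]mxE.
  rewrite lowmx_update mxE big1 // => r _.
  by rewrite mxE R0_tri ?mulr0 //=; lia.
have hl : (j - s < b)%N by lia.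
have [i' ei] := dshift_onto (leq_trans hjs (ltnW hji)); subst i; rewrite /= in hji.
rewrite (update_cand _ (l := Ordinal hl)) /=; last by lia.
rewrite (Ps_stable hrun hcd (leqnn d)) /=; last by lia.
by apply: (work_triangular hrun hcd) => /=; lia.
Qed.

Lemma update_dom_top (i : 'I_m) (i' j : 'I_n) : val i = val i' -> (i < s)%N -> (i <= j)%N ->
  colnorm N i (pihat j) <= cabs (N i (pihat i')).
Proof.
move=> ei his hij; rewrite (pihat_top (j := i')) -?ei // (block_mul_top Qh_top) //.
rewrite colnormE colnorm2_update_top ?(ltnW his) // -colnormE.
apply: (GB_colnorm_le hGB ei his); case: (ltnP j s) => hjs; first by rewrite pihat_top.
by rewrite (leq_trans (ltnW his)) ?pihat_ge.
Qed.

Lemma colnorm2_update_le_pivot l (j : 'I_n) : (l < c)%N -> (s + l <= j)%N ->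
  colnorm2 N (s + l) (pihat j) <= pivot B Ps H l.
Proof.
move=> hlc hj; case: (ltnP j (s + b)) => hjb.
  have hlb : (j - s < b)%N by lia.
  have hjv : val j = (s + Ordinal hlb)%N by rewrite /=; lia.
  have -> : colnorm2 N (s + l) (pihat j) = colnorm2 (work B H c) l (Ps d (Ordinal hlb)).
    by rewrite -colnorm2_lowmx //; apply: eq_bigr => r _; rewrite mxE (update_cand _ hjv).
  by apply: (colnorm2_le_pivot hrun) => //=; lia.
apply: le_trans (colnorm2_le_tail _ _ (leq_addr l s)) _.
rewrite colnorm2_update_top // (le_trans (theta_tail hjb)) //.
by apply: le_trans theta_pivot (pivot_le hrun _ _); lia.
Qed.

Lemma update_dom_low (i : 'I_m) (i' j : 'I_n) : val i = val i' -> (s <= i < s + c)%N ->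
  (i <= j)%N -> colnorm N i (pihat j) <= cabs (N i (pihat i')).
Proof.
move=> ei /andP[his hic] hij; have [i0 i0E] := dshift_onto his; subst i.
have hl : (i0 < b)%N by rewrite /= in hic; lia.
have hi'v : val i' = (s + Ordinal hl)%N by rewrite -ei.
rewrite (update_cand _ hi'v) (Ps_stable hrun hcd (leqnn d)) /=; last by rewrite /= in hic; lia.
apply: colnorm_le_cabs; rewrite (work_diag_pivot hrun (l := i0)) //; last by rewrite /= in hic; lia.
by apply: colnorm2_update_le_pivot; rewrite /= in hic hij; lia.
Qed.

Lemma GB_update : GB (s + c) (N *m pmx R pihat).
Proof.
rewrite mul_pmx; split; [exact: update_size | split => [i j hj hji | i i' ei hi]].
  by rewrite [LHS]mxE update_triangular.
apply: cabs_diag_eq_bigmax => // j hj.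
rewrite colnormE colnorm2_col_perm -colnormE [X in _ <= cabs X]mxE.
have [his | his] := ltnP i s; first exact: update_dom_top.
by apply: update_dom_low; rewrite ?his.
Qed.

End Update.

Lemma noncandidate_tail n s t b (pihat : 'S_n) (P : 'S_b) (sigma : 'S_t) (j : 'I_n) :
  (b <= t)%N -> (s + t <= n)%N ->
  (forall j : 'I_n, ~~ (s <= j < s + t)%N -> pihat j = j) ->
  (forall (j : 'I_n) (l : 'I_b) (l' : 'I_t),
     val j = (s + l)%N -> val l' = val (P l) -> val (pihat j) = (s + sigma l')%N) ->
  (s + b <= j < s + t)%N ->
  (s <= pihat j < s + t)%N && ~~ [exists l : 'I_t, (l < b)%N && (val (pihat j) == s + sigma l)%N].
Proof.
move=> hbt hstn pihat_out pihat_cand /andP[hbj hjt].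
rewrite (perm_fix_stable _ pihat_out); apply/andP; split; first lia.
apply/existsP => -[l /andP[hlb /eqP pjE]].
have blockE (j' : 'I_n) (l' : 'I_b) :
    val j' = (s + l')%N -> val (pihat j') = (s + sigma (widen_ord hbt (P l')))%N.
  by move=> hj'; apply: pihat_cand hj' _.
have hsbn : (s + b <= n)%N by lia.
have := @perm_offblock_neq n s b pihat P (fun l => s + sigma (widen_ord hbt l))%N
  hsbn blockE j (Ordinal hlb) hbj.
have -> : widen_ord hbt (Ordinal hlb) = l by apply: val_inj.
by rewrite pjE eqxx.
Qed.

Unset Implicit Arguments. Set Strict Implicit.

Theorem lemma3p1 (R : realType) (m n k s t : nat) (A : 'M[R[i]]_(m, n))
  (hk1 : (1 <= k)%N) (hkmn : (k <= minn m n)%N)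
  (hsk : (s < k)%N) (ht : (1 <= t)%N) (hstn : (s + t <= n)%N)
  (Q : 'M[R[i]]_m) (Pi : 'M[R[i]]_n)
  (hQ : unitary Q) (hPi : is_perm_mx Pi)
  (hGBs : GB s (ctr Q *m A *m Pi))
  (gamma : 'I_n -> R)
  (hgamma : forall j : 'I_n, gamma j = colnorm2 (ctr Q *m A *m Pi) s j)
  (mu : R)
  (hmu : mu = \big[Num.max/0]_(j : 'I_n | (s + t <= j)%N) colnorm2 (A *m Pi) 0 j)
  (hmax : mu <= \big[Num.max/0]_(j : 'I_n | (s <= j < s + t)%N) gamma j)
  (b : nat) (hb1 : (1 <= b)%N) (hbt : (b <= t)%N)
  (sigma : 'S_t)
  (hsorted : forall (j1 j2 : 'I_n) (l1 l2 : 'I_t),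
      val j1 = (s + sigma l1)%N -> val j2 = (s + sigma l2)%N -> (l1 <= l2)%N ->
      gamma j2 <= gamma j1)
  (cand : pred 'I_n)
  (hcand : forall j : 'I_n,
      cand j = [exists l : 'I_t, (l < b)%N && (val j == s + sigma l)%N])
  (delta : R)
  (hdelta : delta = \big[Num.max/0]_(j : 'I_n | (s <= j < s + t)%N && ~~ cand j) gamma j)
  (B : 'M[R[i]]_(m - s, b))
  (hB : forall (i : 'I_(m - s)) (l : 'I_b) (r : 'I_m) (l' : 'I_t) (c : 'I_n),
      val r = (s + i)%N -> val l' = val l -> val c = (s + sigma l')%N ->
      B i l = (ctr Q *m A *m Pi) r c)
  (d : nat) (hd : d = minn (m - s) b)
  (Rs : nat -> 'M[R[i]]_(m - s, b)) (Ps : nat -> 'S_b) (H : nat -> 'M[R[i]]_(m - s))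
  (hrun : GB_run d B Rs Ps H)
  (c : nat) (hc1 : (1 <= c)%N) (hcd : (c <= d)%N)
  (hcsat : forall (r : 'I_(m - s)) (l : 'I_b), val r = c.-1 -> val l = c.-1 ->
      Num.max delta mu <= cabs (Rs d r l) ^+ 2)
  (hcmax : forall i : nat, (c < i <= d)%N ->
      ~ (forall (r : 'I_(m - s)) (l : 'I_b), val r = i.-1 -> val l = i.-1 ->
           Num.max delta mu <= cabs (Rs d r l) ^+ 2))
  (pihat : 'S_n)
  (hpi_out : forall j : 'I_n, ~~ (s <= j < s + t)%N -> pihat j = j)
  (hpi_cand : forall (j : 'I_n) (l : 'I_b) (l' : 'I_t),
      val j = (s + l)%N -> val l' = val (Ps d l) -> val (pihat j) = (s + sigma l')%N)
  (Qhat : 'M[R[i]]_m)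
  (hQhat1 : forall i j : 'I_m, (i < s)%N || (j < s)%N -> Qhat i j = (i == j :> nat)%:R)
  (hQhat2 : forall (i j : 'I_m) (i' j' : 'I_(m - s)),
      val i = (s + i')%N -> val j = (s + j')%N ->
      Qhat i j = (\prod_(l < c) H l) i' j') :
  GB (s + c) (ctr (Q *m Qhat) *m A *m (Pi *m pmx R pihat)).
Proof.
set R0 := ctr Q *m A *m Pi.
have hsm : (s < m)%N by move: hkmn; rewrite leq_min => /andP[hkm _]; lia.
have hdb := run_d_le_b hrun.
have hdm := run_d_le_p hrun.
have theta_pivot : Num.max delta mu <= pivot B Ps H c.-1.
  have hc1p : (c.-1 < m - s)%N by lia.
  have hc1b : (c.-1 < b)%N by lia.
  rewrite -(Rs_diag_pivot hrun (k := d) (i := Ordinal hc1p) (j := Ordinal hc1b)) //; last lia.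
  exact: hcsat.
have ME : ctr (Q *m Qhat) *m A *m (Pi *m pmx R pihat) = ctr Qhat *m R0 *m pmx R pihat.
  by rewrite ctrM !mulmxA.
rewrite ME; apply: (GB_update (theta := Num.max delta mu) hsm _ hGBs hrun hcd) => //.
- lia.
- by move=> i j; apply: hQhat2.
- by move=> j hj; apply: hpi_out; rewrite negb_and -ltnNge hj.
- move=> i j l hj; have hl : (Ps d l < t)%N by apply: leq_trans hbt.
  by rewrite (hB i (Ps d l) (dshift s i) (Ordinal hl) (pihat j)) //; apply: hpi_cand hj _.
move=> j hj; case: (ltnP j (s + t)) => hjt.
  have := noncandidate_tail (j := j) hbt hstn hpi_out hpi_cand.
  rewrite hj hjt => /(_ isT) pj_noncand.
  by rewrite -hgamma le_max hdelta (bigD1 (pihat j)) ?hcand //= le_max lexx.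
rewrite le_max hpi_out ?negb_and -?leqNgt ?hjt ?orbT // hmu.
apply/orP; right; apply: le_trans (colnorm2_le_tail _ _ (leq0n s)) _.
rewrite -mulmxA colnorm2_unitary; last exact: unitary_ctr.
by rewrite (bigD1 j) //= le_max lexx.
Qed.
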